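(* Let $p$ be an odd prime, $r,m$ positive integers and $s\in\{0,1,\dots,mp^{r-1}-1\}$. Then $$\binom{mp^r}{sp}\binom{2sp}{sp}\binom{2mp^r-2sp}{mp^r-sp}\equiv\binom{mp^{r-1}}{s}\binom{2s}{s}\binom{2mp^{r-1}-2s}{mp^{r-1}-s}\pmod{p^{2r}}.$$ *)

From mathcomp Require Import all_boot.

From mathcomp Require Import all_boot all_algebra.
From mathcomp Require Import ring zify.
Import GRing.Theory.

(* Put n = m p^(r-1), t = n - s and B(s, t) = C(s+t, s) C(2s, s) C(2t, t); the claim is
   B(sp, tp) = B(s, t) mod p^(2r), and p^(r-1) divides s + t.  Write (kp)! = p^k k! F(k), where
   F(k) is the product of the integers in [1, kp] prime to p.  Then
     B(sp, tp) F(s)^3 F(t)^3 = B(s, t) F(s+t) F(2s) F(2t).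
   Since F(a + b) = F(a) prod_j (ap + j), where j runs over [1, bp] prime to p, and the linear
   coefficient of prod_j (x + j) is divisible by bp (compare x = 0 with x = -bp, using
   j -> bp - j and that p is odd), F(a + b) = F(a) F(b) mod p^(2(w+1)) as soon as p^w
   divides a and b.  Take for w the p-adic valuation of s, capped at r - 1.  When w < r - 1,
   Legendre's formula shows that every level k in (w, r-1] produces two carries in
   B(s, t), so p^(2(r-1-w)) divides B(s, t) and supplies the missing power of p. *)

Definition pfree_fact p a := \prod_(1 <= j < (a * p).+1 | ~~ (p %| j)) j.

Lemma prod_multiples p k : 0 < p ->
  \prod_(1 <= j < (k * p).+1 | p %| j) j = p ^ k * k`!.
Proof.
move=> p_gt0; elim: k => [|k IHk]; first by rewrite big_geq.
rewrite (big_cat_nat _ (n := (k * p).+1)) //= ?IHk; last by rewrite ltnS leq_mul2r leqnSn orbT.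
rewrite mulSnr (big_cat_nat _ (n := k * p + p)) //=; last by lia.
rewrite big_nat_cond big1 => [|j /andP[/andP[lt_kp_j lt_j_kpp] /dvdnP[i def_j]]]; last first.
  move: lt_kp_j lt_j_kpp; rewrite def_j -mulSnr !ltn_pmul2r // ltnS => lt_ki.
  by rewrite leqNgt lt_ki.
by rewrite big_mkcond big_nat1 dvdn_addr ?dvdn_mull // dvdnn factS expnS; ring.
Qed.

Lemma fact_mulnE p k : 0 < p -> (k * p)`! = p ^ k * k`! * pfree_fact p k.
Proof. by move=> p_gt0; rewrite fact_prod (bigID (dvdn p)) /= prod_multiples. Qed.

Lemma coprime_pfree_fact p a : prime p -> coprime p (pfree_fact p a).
Proof.
move=> p_pr; apply: (big_ind (coprime p)) => [|x y|j]; first exact: coprimen1.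
  by rewrite coprimeMr => -> ->.
by rewrite prime_coprime.
Qed.

Definition binom_triple s t := 'C(s + t, s) * 'C(s + s, s) * 'C(t + t, t).

Lemma binom_triple_gt0 s t : 0 < binom_triple s t.
Proof. by rewrite !muln_gt0 !bin_gt0 !leq_addr. Qed.

Lemma binom_triple_fact s t :
  binom_triple s t * (s`! ^ 3 * t`! ^ 3) = (s + t)`! * (s + s)`! * (t + t)`!.
Proof.
rewrite -[(s + t)`!](bin_fact (leq_addr t s)) -[(s + s)`!](bin_fact (leq_addr s s)).
by rewrite -[(t + t)`!](bin_fact (leq_addr t t)) !addKn /binom_triple; ring.
Qed.

Lemma binom_tripleE n s : s <= n ->
  'C(n, s) * 'C(2 * s, s) * 'C(2 * n - 2 * s, n - s) = binom_triple s (n - s).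
Proof. by move=> le_sn; rewrite /binom_triple subnKC // -mulnBr !mul2n -!addnn. Qed.

Lemma binom_triple_mulp p s t : 0 < p ->
  binom_triple (s * p) (t * p) * (pfree_fact p s ^ 3 * pfree_fact p t ^ 3)
  = binom_triple s t * (pfree_fact p (s + t) * pfree_fact p (s + s) * pfree_fact p (t + t)).
Proof.
move=> p_gt0.
set Fs := pfree_fact p s; set Ft := pfree_fact p t.
set N := pfree_fact p (s + t) * pfree_fact p (s + s) * pfree_fact p (t + t).
set Z := (p ^ s * s`!) ^ 3 * (p ^ t * t`!) ^ 3.
have Z_gt0 : 0 < Z by rewrite !muln_gt0 !expn_gt0 p_gt0 !fact_gt0.
apply/eqP; rewrite -(eqn_pmul2r Z_gt0); apply/eqP.
transitivity (binom_triple (s * p) (t * p) * ((p ^ s * s`! * Fs) ^ 3 * (p ^ t * t`! * Ft) ^ 3)).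
  by rewrite /Z; ring.
have := binom_triple_fact (s * p) (t * p); rewrite -!mulnDl !fact_mulnE // => ->.
transitivity (binom_triple s t * (s`! ^ 3 * t`! ^ 3)
                * (p ^ (s + t) * p ^ (s + s) * p ^ (t + t)) * N).
  by rewrite binom_triple_fact /N; ring.
by rewrite /Z !expnD; ring.
Qed.

Lemma logn_fact_widen p K n : prime p -> n <= K ->
  logn p n`! = \sum_(1 <= k < K.+1) n %/ p ^ k.
Proof.
move=> p_pr le_nK; rewrite logn_fact // [RHS](big_cat_nat _ (n := n.+1)) //=.
rewrite [X in _ = _ + X]big_nat_cond [X in _ = _ + X]big1 ?addn0 // => k /andP[/andP[lt_nk _] _].
by rewrite divn_small // (ltn_trans lt_nk) // ltn_expl // prime_gt1.
Qed.

Lemma sum_nat_leq L K : L <= K -> \sum_(1 <= i < K.+1) (i <= L : nat) = L.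
Proof.
move=> le_LK; rewrite -big_mkcond (eq_bigl (fun i => true && (i < L.+1))) //.
by rewrite -big_nat_widen // sum_nat_const_nat muln1 subn1.
Qed.

Lemma divn_triple_ge s t q : 0 < q ->
  3 * (s %/ q) + 3 * (t %/ q) <= (s + t) %/ q + (s + s) %/ q + (t + t) %/ q.
Proof. by move=> q_gt0; rewrite !divnD //; lia. Qed.

(* With a = s mod q and b = t mod q we get a + b = q: adding s and t carries, and so does
   doubling whichever of a, b is at least q/2. *)
Lemma divn_triple_carry s t q : 0 < q -> q %| s + t -> ~~ (q %| s) ->
  3 * (s %/ q) + 3 * (t %/ q) + 2 <= (s + t) %/ q + (s + s) %/ q + (t + t) %/ q.
Proof.
move=> q_gt0 q_dvd_st q_ndvd_s.
rewrite !divnD //; set a := s %% q; set b := t %% q.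
have a_gt0 : 0 < a by rewrite lt0n.
have [lt_aq lt_bq] : a < q /\ b < q by rewrite !ltn_mod.
have /dvdnP[[|[|c]] def_ab] : q %| a + b by rewrite /dvdn modnDm.
all: lia.
Qed.

Lemma pfactor_dvdn_binom_triple p s t u w : prime p ->
  p ^ u %| s + t -> ~~ (p ^ w.+1 %| s) -> p ^ (2 * (u - w)) %| binom_triple s t.
Proof.
move=> p_pr pu_dvd_st pw_ndvd_s; rewrite pfactor_dvdn ?binom_triple_gt0 //.
have [le_uw | lt_wu] := leqP u w; first by move: le_uw; rewrite -subn_eq0 => /eqP->.
have s_gt0 : 0 < s by rewrite lt0n; apply: contraNneq pw_ndvd_s => ->.
have le_u_st : u <= s + t.
  exact: leq_trans (ltnW (ltn_expl u (prime_gt1 p_pr))) (dvdn_leq (ltn_addr t s_gt0) pu_dvd_st).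
have level k : 3 * (s %/ p ^ k) + 3 * (t %/ p ^ k) + 2 * (k <= u)
    <= (s + t) %/ p ^ k + (s + s) %/ p ^ k + (t + t) %/ p ^ k + 2 * (k <= w).
  have pk_gt0 : 0 < p ^ k by rewrite expn_gt0 prime_gt0.
  case: (leqP k w) => [_ | lt_wk].
    by rewrite leq_add ?divn_triple_ge // leq_mul2l leq_b1 orbT.
  case: (leqP k u) => [le_ku | _]; rewrite !addn0 ?divn_triple_ge //.
  apply: divn_triple_carry => //; first exact: dvdn_trans (dvdn_exp2l p le_ku) pu_dvd_st.
  by apply: contraNN pw_ndvd_s; apply: dvdn_trans; rewrite dvdn_exp2l.
set K := s + s + t + t.
have := congr1 (logn p) (binom_triple_fact s t).
(* Generalized so that lognM cannot unfold binom_triple. *)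
move: (binom_triple s t) (binom_triple_gt0 s t) => X X_gt0.
rewrite !lognM ?muln_gt0 ?expn_gt0 ?fact_gt0 //.
rewrite !(logn_fact_widen p K) //; try by rewrite /K; lia.
have := leq_sum (index_iota 1 K.+1) (P := xpredT) (fun k _ => level k).
by rewrite !big_split /= !big1_eq !sum_nat_leq /K; lia.
Qed.

Lemma binom_triple_pfactor p s t u : prime p -> p ^ u %| s + t ->
  exists2 w, w <= u & [/\ p ^ w %| s, p ^ w %| t & p ^ (2 * (u - w)) %| binom_triple s t].
Proof.
move=> p_pr pu_st; have [pu_s | pu_ns] := boolP (p ^ u %| s).
  exists u => //; split; [exact: pu_s | by rewrite -(dvdn_addr _ pu_s) |].
  by rewrite subnn muln0 expn0 dvd1n.
have s_gt0 : 0 < s by rewrite lt0n; apply: contraNneq pu_ns => ->; exact: dvdn0.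
have lt_wu : logn p s < u by rewrite ltnNge -pfactor_dvdn.
have pw_s := pfactor_dvdnn p s.
exists (logn p s); first exact: ltnW.
split; [exact: pw_s | |].
  by rewrite -(dvdn_addr _ pw_s) (dvdn_trans _ pu_st) // dvdn_exp2l // ltnW.
by apply: pfactor_dvdn_binom_triple => //; rewrite pfactor_dvdn // ltnn.
Qed.

Local Open Scope ring_scope.

Definition pfree_shift p a (x : int) : int :=
  \prod_(1 <= j < (a * p).+1 | ~~ (p %| j)%N) (x + j%:Z).

Lemma pfree_factE p a :
  (pfree_fact p a)%:Z = \prod_(1 <= j < (a * p).+1 | ~~ (p %| j)%N) j%:Z.
Proof. exact: (big_morph Posz PoszM (erefl 1%:Z)). Qed.

Lemma pfree_factD p a b : (0 < p)%N ->
  (pfree_fact p (a + b))%:Z = (pfree_fact p a)%:Z * pfree_shift p b (a * p)%:Z.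
Proof.
move=> p_gt0; rewrite !pfree_factE mulnDl (big_cat_nat _ (n := (a * p).+1)) //=; last by lia.
congr (_ * _); rewrite -[(a * p).+1]add1n big_addn -addnS addKn.
apply: eq_big => [j|j _]; first by rewrite dvdn_addl // dvdn_mull.
by rewrite PoszD addrC.
Qed.

Lemma prodrN_seq (R : comRingType) (I : Type) (r : seq I) (P : pred I) (F : I -> R) :
  \prod_(i <- r | P i) - F i = (-1) ^+ count P r * \prod_(i <- r | P i) F i.
Proof.
rewrite -sum1_count; elim/big_rec3: _ => [|i x n _ _ ->]; first by rewrite mulr1.
by rewrite exprS mulN1r !mulNr mulrCA.
Qed.

Lemma prod_shift_linear {I : Type} (r : seq I) (P : pred I) (f : I -> int) :
  exists e, forall x,
    (x ^+ 2 %| \prod_(j <- r | P j) (x + f j) - \prod_(j <- r | P j) f j - x * e)%Z.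
Proof.
elim: r => [|j r [e IHr]]; first by exists 0 => x; rewrite !big_nil subrr mulr0 subr0 dvdz0.
case Pj: (P j); last by exists e => x; rewrite !big_cons Pj.
exists (\prod_(j <- r | P j) f j + f j * e) => x; rewrite !big_cons Pj.
set A := \prod_(_ <- _ | _) (_ + _); set B := \prod_(_ <- _ | _) f _.
have -> : (x + f j) * A - f j * B - x * (B + f j * e)
    = (f j + x) * (A - B - x * e) + x ^+ 2 * e by ring.
by apply: rpredD; [apply/dvdz_mull/IHr | apply/dvdz_mulr/dvdzz].
Qed.

Lemma pfree_shift_reflect p a : (0 < p)%N ->
  exists k : nat, pfree_shift p a (- (a * p)%:Z) = (-1) ^+ k * (pfree_fact p a)%:Z.
Proof.
move=> p_gt0; rewrite /pfree_shift pfree_factE; set n := (a * p)%N.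
have [n0 | n_gt0] := posnP n; first by exists 0%N; rewrite n0 !big_geq ?mul1r.
have drop_n (F : nat -> int) :
    \prod_(1 <= j < n.+1 | ~~ (p %| j)%N) F j = \prod_(1 <= j < n | ~~ (p %| j)%N) F j.
  by rewrite big_mkcond big_nat_recr //= dvdn_mull // mulr1 -big_mkcond.
exists (count (fun j => ~~ (p %| j)%N) (index_iota 1 n)).
rewrite !drop_n -prodrN_seq big_nat_rev /= [LHS]big_mkcond [RHS]big_mkcond.
apply: eq_big_nat => j /andP[_ lt_jn]; rewrite add1n subSS.
rewrite dvdn_subr ?dvdn_mull ?(ltnW lt_jn) //.
by case: (p %| j)%N => //=; rewrite -subzn ?(ltnW lt_jn) // addrA addNr add0r.
Qed.

Lemma pfree_shift_linear p a : prime p -> odd p -> exists e, forall x,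
  (x ^+ 2 %| pfree_shift p a x - (pfree_fact p a)%:Z - x * (a * p)%:Z * e)%Z.
Proof.
move=> p_pr p_odd; set n := (a * p)%N; set F := pfree_fact p a.
have [e1 He1] := prod_shift_linear (index_iota 1 n.+1) (fun j => ~~ (p %| j)%N) (fun j => j%:Z).
rewrite -pfree_factE -/F in He1.
have {}He1 x : (x ^+ 2 %| pfree_shift p a x - F%:Z - x * e1)%Z := He1 x.
have [n0 | n_gt0] := posnP n.
  exists 0 => x; rewrite /pfree_shift /F pfree_factE -/n n0 !big_geq //.
  by rewrite subrr mulr0 subr0 dvdz0.
suff /dvdzP[e def_e1] : (n%:Z %| e1)%Z by exists e => x; rewrite -mulrA [_ * e]mulrC -def_e1.
(* Evaluate at x = -n: the reflection j -> n - j gives pfree_shift p a (-n) = +-F, and the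
   sign - would force n to divide 2 F, which is prime to p. *)
have [k Hk] := pfree_shift_reflect p a (prime_gt0 p_pr).
have := He1 (- n%:Z); rewrite sqrrN Hk -signr_odd.
have -> c : c * F%:Z - F%:Z - - n%:Z * e1 = n%:Z * e1 - (1 - c) * F%:Z by ring.
case: (odd k) => /=.
  rewrite expr1 opprK => dvd_n2; exfalso.
  have dvd_n_2F : (n%:Z %| (F + F)%N%:Z)%Z.
    rewrite (_ : _%:Z = n%:Z * e1 - (n%:Z * e1 - (1 + 1) * F%:Z)); last by rewrite PoszD; ring.
    apply: rpredB; first exact/dvdz_mulr/dvdzz.
    by apply: dvdz_trans dvd_n2; apply/dvdz_mulr/dvdzz.
  have := dvdn_trans (dvdn_mull a (dvdnn p)) dvd_n_2F.
  have := coprime_pfree_fact p a p_pr; rewrite prime_coprime // => /negbTE ndvd_pF.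
  rewrite addnn -mul2n Euclid_dvdM // dvdn_prime2 // ndvd_pF orbF => /eqP p2.
  by rewrite p2 in p_odd.
by rewrite subrr mul0r subr0 expr2 dvdz_mul2l // eqz_nat -lt0n.
Qed.

Lemma pfree_shift_mod p a x d : prime p -> odd p ->
  (d %| x)%Z -> (d %| (a * p)%:Z)%Z -> (d ^+ 2 %| pfree_shift p a x - (pfree_fact p a)%:Z)%Z.
Proof.
move=> p_pr p_odd d_x d_ap; have [e He] := pfree_shift_linear p a p_pr p_odd.
rewrite -(subrK (x * (a * p)%:Z * e) (_ - _)); apply: rpredD.
  exact: dvdz_trans (dvdz_exp2r 2 d_x) (He x).
by rewrite expr2; apply/dvdz_mulr/dvdz_mul.
Qed.

Lemma dvdz_subM d a b c e : (d %| a - b)%Z -> (d %| c - e)%Z -> (d %| a * c - b * e)%Z.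
Proof.
move=> d_ab d_ce; rewrite (_ : _ - _ = (a - b) * c + b * (c - e)); last by ring.
by apply: rpredD; [apply: dvdz_mulr | apply: dvdz_mull].
Qed.

Lemma pfree_fact_triple_mod p s t w : prime p -> odd p -> (p ^ w %| s)%N -> (p ^ w %| t)%N ->
  ((p ^ w.+1)%:Z ^+ 2 %| (pfree_fact p (s + t) * pfree_fact p (s + s) * pfree_fact p (t + t))%:Z
     - (pfree_fact p s ^ 3 * pfree_fact p t ^ 3)%:Z)%Z.
Proof.
move=> p_pr p_odd pw_s pw_t; set d := (p ^ w.+1)%:Z.
have d_mulp b : (p ^ w %| b)%N -> (d %| (b * p)%:Z)%Z.
  by move=> pw_b; rewrite dvdzE /= expnSr dvdn_mul.
have congr b c : (p ^ w %| b)%N -> (p ^ w %| c)%N ->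
    (d ^+ 2 %| pfree_shift p b (c * p)%:Z - (pfree_fact p b)%:Z)%Z.
  by move=> pw_b pw_c; apply: pfree_shift_mod; rewrite ?d_mulp.
rewrite !PoszM !pfree_factD ?prime_gt0 //.
set Fs := (pfree_fact p s)%:Z; set Ft := (pfree_fact p t)%:Z.
rewrite [X in _ - X](_ : _ = Fs * Ft * (Fs * Fs) * (Ft * Ft)); last by ring.
by apply: dvdz_subM; [apply: dvdz_subM|]; rewrite -mulrBr; apply/dvdz_mull/congr.
Qed.

Lemma binom_triple_mulp_mod p s t u : prime p -> odd p -> (p ^ u %| s + t)%N ->
  (binom_triple (s * p) (t * p) = binom_triple s t %[mod p ^ (2 * u.+1)])%N.
Proof.
move=> p_pr p_odd pu_st.
have [w le_wu [pw_s pw_t pB]] := binom_triple_pfactor p s t u p_pr pu_st.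
have AD_BN := binom_triple_mulp p s t (prime_gt0 p_pr).
have pND := pfree_fact_triple_mod p s t w p_pr p_odd pw_s pw_t.
set A := binom_triple (s * p) (t * p) in AD_BN *.
set B := binom_triple s t in pB AD_BN *.
set N := (pfree_fact p (s + t) * _ * _)%N in AD_BN pND.
set D := (pfree_fact p s ^ 3 * _)%N in AD_BN pND.
have coprime_pD : coprime p D by rewrite coprimeMr !coprimeXr ?coprime_pfree_fact.
apply/eqP; rewrite -eqz_nat -!modz_nat eqz_mod_dvd.
have coprime_qD : coprimez (p ^ (2 * u.+1))%:Z D%:Z by rewrite coprimezE !absz_nat coprimeXl.
rewrite -(Gauss_dvdzl _ coprime_qD).
have -> : (A%:Z - B%:Z) * D%:Z = B%:Z * (N%:Z - D%:Z) by rewrite mulrBl mulrBr -!PoszM AD_BN.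
rewrite (_ : 2 * u.+1 = 2 * (u - w) + w.+1 * 2)%N; last first.
  by rewrite [(_ * 2)%N]mulnC -mulnDr addnS subnK.
rewrite expnD (expnM p w.+1 2) PoszM -[X in (_ * X %| _)%Z]natz natrX natz.
by apply: dvdz_mul pND; rewrite dvdzE.
Qed.

Local Close Scope ring_scope.

Theorem lemma2p14 (p r m s : nat) :
  prime p -> odd p -> 0 < r -> 0 < m -> s < m * p ^ r.-1 ->
  'C(m * p ^ r, s * p) * 'C(2 * (s * p), s * p)
    * 'C(2 * (m * p ^ r) - 2 * (s * p), m * p ^ r - s * p)
  = 'C(m * p ^ r.-1, s) * 'C(2 * s, s)
    * 'C(2 * (m * p ^ r.-1) - 2 * s, m * p ^ r.-1 - s)
  %[mod p ^ (2 * r)].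
Proof.
(* 0 < m is implied by s < m * p ^ r.-1. *)
move=> p_pr p_odd r_gt0 _ lt_s_n; set n := m * p ^ r.-1 in lt_s_n *.
have -> : m * p ^ r = n * p by rewrite /n -mulnA -expnSr prednK.
have le_sn := ltnW lt_s_n.
rewrite !binom_tripleE ?leq_mul2r ?le_sn ?orbT // -mulnBl -(prednK r_gt0).
apply: binom_triple_mulp_mod => //.
by rewrite subnKC // dvdn_mull.
Qed.
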